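(* Let $\Gamma=\mathbb Q_{>0}$ be the multiplicative group of positive rationals, acting on the additive group $\mathbb Q$ (discrete) by $\widehat\rho(\gamma)(x)=\gamma x$, and let $\rho$ be the dual action of $\Gamma$ on the compact group $\widehat{\mathbb Q}$, i.e. $\rho(\gamma)(g)(x)=g(\gamma x)$ for $g\in\widehat{\mathbb Q}$, $x\in\mathbb Q$. Then $(\widehat{\mathbb Q},\rho)$ is expansive, but for no finitely generated subgroup $\Gamma_0\subset\Gamma$ is the restriction of $\rho$ to $\Gamma_0$ expansive.
   Context: $\widehat{\mathbb Q}$ is the Pontryagin dual of the discrete group $\mathbb Q$ (a one-dimensional solenoid). An action $\rho$ of $\Gamma$ on a metrizable topological group $X$ by continuous endomorphisms is expansive if there is a neighborhood $U$ of the identity with $\bigcap_{\gamma\in\Gamma}\rho(\gamma)^{-1}(U)=\{e\}$. *)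

From HB Require Import structures.
From mathcomp Require Import all_boot all_order all_algebra.
From mathcomp Require Import reals complex.
Set Implicit Arguments. Unset Strict Implicit. Unset Printing Implicit Defensive.
Import Order.TTheory GRing.Theory Num.Theory.
Local Open Scope ring_scope.

(* The circle group T is modelled as the unit complex numbers in R[i],
   for a real field R (realType).  The Pontryagin dual of the discrete
   group (Q,+) is the set of characters chi : rat -> R[i] with values in T
   that are additive-to-multiplicative homomorphisms.  Its topology is the
   compact-open topology, which (Q being discrete) is the topology of
   pointwise convergence. *)

Definition is_char (R : realType) (g : rat -> R[i]) : Prop :=
  (forall x, `|g x| = 1) /\ (forall x y, g (x + y) = g x * g y).

Definition char_one (R : realType) : rat -> R[i] := fun _ => 1.

Definition rho (R : realType) (gamma : rat) (g : rat -> R[i]) : rat -> R[i] :=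
  fun x => g (gamma * x).

Definition nbhd_one (R : realType) (U : (rat -> R[i]) -> Prop) : Prop :=
  exists (xs : seq rat) (eps : R), 0 < eps /\
    forall g, is_char g -> (forall x, x \in xs -> `|g x - 1| < (eps%:C)%C) -> U g.

Definition expansive_on (R : realType) (G : rat -> Prop) : Prop :=
  exists U : (rat -> R[i]) -> Prop, nbhd_one U /\
    forall g, is_char g ->
      ((forall gamma, G gamma -> U (rho gamma g)) <-> g = char_one R).

Definition gen_subgroup (gens : seq rat) : rat -> Prop :=
  fun gamma => exists ks : seq int, size ks = size gens /\
    gamma = \prod_(i < size gens) gens`_i ^ ks`_i.

Definition posQ : rat -> Prop := fun gamma => 0 < gamma.

From mathcomp Require Import all_boot all_order all_algebra.
From mathcomp Require Import reals complex.
From mathcomp Require Import ring lra.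
From mathcomp Require cyclic.
From mathcomp Require boolp.
Import Order.TTheory GRing.Theory Num.Theory.
Set Implicit Arguments. Unset Strict Implicit. Unset Printing Implicit Defensive.
Local Open Scope ring_scope.

(* For the whole of Q_{>0} take U = {g | |g 1 - 1| < 1/2}.  If rho(gamma) g lies in
   U for every gamma > 0, then w := g y (y > 0) satisfies |w^(2^n) - 1| < 1/2 for all
   n; as |u^2 - 1| >= 3/2 |u - 1| whenever |u - 1| < 1/2, these distances would grow
   geometrically unless w = 1.  So g is trivial on Q_{>0}, hence on Q.

   For a finitely generated subgroup and a basic neighbourhood given by a finite set
   xs, choose a prime q beyond all numerators and denominators of the generators and
   all denominators in xs.  Every gamma in the subgroup is a ratio of integers prime
   to q, so gamma x has denominator prime to q for x in xs.  A character of Q that is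
   trivial on Z_(q) but not on Q therefore stays in U along the whole orbit.  Such a
   character is built from roots of unity z n with z (n+1) ^ (n+1) = z n, the value
   at 1/n!, whose orders divide the q-part of n!. *)

Section Characters.
Variables (R : realType) (g : rat -> R[i]).
Hypothesis g_char : is_char g.

Lemma is_char0 : g 0 = 1.
Proof.
have g0_neq0 : g 0 != 0 by rewrite -normr_eq0 g_char.1 oner_eq0.
by apply: (mulfI g0_neq0); rewrite mulr1 -g_char.2 addr0.
Qed.

Lemma is_charN x : g (- x) * g x = 1.
Proof. by rewrite -g_char.2 addNr is_char0. Qed.

Lemma is_char_natmul n x : g (n%:R * x) = g x ^+ n.
Proof.
elim: n => [|n IHn]; first by rewrite mul0r expr0 is_char0.
by rewrite mulrSr mulrDl mul1r g_char.2 IHn exprSr.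
Qed.

Lemma is_char_rho gamma : is_char (rho gamma g).
Proof. by split=> [x | x y]; rewrite /rho ?mulrDr; [exact: g_char.1 | exact: g_char.2]. Qed.

End Characters.

Lemma expanding_bounded_eq0 (R : archiRealFieldType) (d : nat -> R) (k c : R) :
  1 < k -> (forall n, 0 <= d n) -> (forall n, k * d n <= d n.+1) ->
  (forall n, d n <= c) -> d 0 = 0.
Proof.
move=> k_gt1 d_ge0 d_grow d_le; apply/eqP; rewrite eq_le d_ge0 andbT leNgt.
apply/negP => d0_gt0.
have d_lin n : d 0 + n%:R * ((k - 1) * d 0) <= d n.
  elim: n => [|n IHn]; first by rewrite mul0r addr0.
  have step : (k - 1) * d 0 <= (k - 1) * d n.
    rewrite ler_wpM2l ?subr_ge0 ?(ltW k_gt1) //; apply: le_trans IHn.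
    by rewrite lerDl !mulr_ge0 ?subr_ge0 ?(ltW k_gt1) ?(ltW d0_gt0).
  have := d_grow n; rewrite -natr1 mulrDl mul1r; lra.
have eps_gt0 : 0 < (k - 1) * d 0 by rewrite mulr_gt0 // subr_gt0.
set N := Num.bound (c / ((k - 1) * d 0)).
have : c < N%:R * ((k - 1) * d 0).
  rewrite -ltr_pdivrMr //; apply: archi_boundP.
  by rewrite divr_ge0 ?(ltW eps_gt0) // (le_trans (d_ge0 0) (d_le 0)).
have := d_lin N; have := d_le N; lra.
Qed.

Lemma ler_norm_sqr_sub1 (F : numFieldType) (u : F) :
  2 * `|u - 1| < 1 -> 3 * `|u - 1| <= 2 * `|u ^+ 2 - 1|.
Proof.
move=> near1.
have -> : u ^+ 2 - 1 = (u - 1) * (2 + (u - 1)) by ring.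
rewrite normrM mulrCA mulrC ler_wpM2l //.
apply: le_trans (_ : 2 * (`|2 : F| - `|u - 1|) <= _); last first.
  by rewrite ler_wpM2l ?ler0n ?lerB_normD.
rewrite ger0_norm // mulrBr -subr_ge0.
have -> : 2 * 2 - 2 * `|u - 1| - 3 = 1 - 2 * `|u - 1| :> F by ring.
by rewrite subr_ge0 ltW.
Qed.

Lemma pow2_near1_eq1 (R : realType) (w : R[i]) :
  (forall n, `|w ^+ (2 ^ n) - 1| < (1 / 2)%:C%C) -> w = 1.
Proof.
move=> near1.
have normE (x : R[i]) : `|x| = (complex.Re `|x|)%:C%C by rewrite RRe_real ?normr_real.
(* Norms in R[i] are real; [d] moves them to R, where the archimedean property lives. *)
pose d n := complex.Re `|w ^+ (2 ^ n) - 1|.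
have d_lt n : d n < 1 / 2 by rewrite -ltcR /d -normE.
have d_ge0 n : 0 <= d n by rewrite -(lecR 0) /d -normE; exact: normr_ge0.
have twice_lt n : 2 * `|w ^+ (2 ^ n) - 1| < 1.
  rewrite normE -/(d n) mulr_natl -rmorphMn -mulr_natl (ltcR _ 1).
  by rewrite -ltr_pdivlMl // mulrC d_lt.
have d_grow n : 3 / 2 * d n <= d n.+1.
  have grow := ler_norm_sqr_sub1 (twice_lt n).
  rewrite -exprM -expnSr [`|w ^+ _ - 1|]normE [`|w ^+ (2 ^ n.+1) - 1|]normE in grow.
  rewrite !mulr_natl -!rmorphMn lecR -/(d n) -/(d n.+1) in grow.
  by rewrite mulrAC ler_pdivrMr // mulr_natl mulr_natr.
have d0 : d 0 = 0.
  apply: (@expanding_bounded_eq0 _ d (3 / 2) (1 / 2)) => // [|n]; last exact/ltW.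
  by rewrite ltr_pdivlMr // mul1r ltr_nat.
by apply/eqP; rewrite -subr_eq0 -normr_eq0 normE -/(d 0) d0.
Qed.

Theorem expansive_posQ (R : realType) : expansive_on R posQ.
Proof.
exists (fun g => `|g 1 - 1| < (1 / 2)%:C%C); split.
  exists [:: 1], (1 / 2); split; first by rewrite divr_gt0.
  by move=> g _; apply; rewrite mem_head.
move=> g g_char; split=> [near1 | -> gamma _]; last by rewrite /rho subrr normr0 ltcR divr_gt0.
have g_pos y : 0 < y -> g y = 1.
  move=> y_gt0; apply: pow2_near1_eq1 => n.
  rewrite -is_char_natmul // -[_ * y]mulr1; apply: (near1 _).
  by rewrite /posQ mulr_gt0 // ltr0n expn_gt0.
apply: boolp.funext => x; rewrite /char_one.
case: (ltrgtP x 0) => [x_lt0 | x_gt0 | ->]; last exact: is_char0.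
  by have := is_charN g_char x; rewrite g_pos ?oppr_gt0 // mul1r.
exact: g_pos.
Qed.

Lemma coprime_expr_inv (R : pzRingType) (u : R) c K :
  coprime c K -> u ^+ K = 1 -> exists d, u ^+ (c * d) = u.
Proof.
move=> coKc uK; case: (posnP K) => [K0 | K_gt0].
  by exists 1%N; move: coKc; rewrite K0 /coprime gcdn0 => /eqP ->.
exists (c ^ (totient K).-1)%N; rewrite -expnS prednK ?totient_gt0 //.
by rewrite -(expr_mod _ uK) cyclic.Euler_exp_totient // expr_mod.
Qed.

Lemma coprime_expr_root (R : pzRingType) (u : R) c K :
  coprime c K -> u ^+ K = 1 -> exists2 v, v ^+ c = u & v ^+ K = 1.
Proof.
move=> coKc uK; have [d ud] := coprime_expr_inv coKc uK.
by exists (u ^+ d); rewrite -exprM 1?mulnC ?ud // exprM uK expr1n.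
Qed.

Lemma nontrivial_unity_root (C : numClosedFieldType) n :
  (1 < n)%N -> exists2 z : C, z ^+ n = 1 & z != 1.
Proof.
move=> n_gt1; have n1_gt0 : (0 < n.-1)%N by rewrite -ltnS prednK // ltnW.
have [z zE] := @solve_monicpoly C n.-1 (fun _ => -1) n1_gt0.
have sum_z : \sum_(i < n) z ^+ i = 0.
  rewrite -(prednK (ltnW n_gt1)) big_ord_recr /= zE -big_split /=.
  by rewrite big1 // => i _; rewrite mulN1r addrN.
exists z; first by apply/eqP; rewrite -subr_eq0 subrX1 sum_z mulr0.
apply/eqP => z1; move: sum_z; rewrite z1 (eq_bigr (fun=> 1)) => [|i _]; last exact: expr1n.
by rewrite sumr_const card_ord => /eqP; rewrite pnatr_eq0 gtn_eqF // ltnW.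
Qed.

Lemma fact_partS (pi : nat_pred) n :
  (((n.+1)`!)`_pi = (n.+1)`_pi * (n`!)`_pi)%N.
Proof. by rewrite factS partnM ?fact_gt0. Qed.

Lemma unity_root_extend (C : numClosedFieldType) (pi : nat_pred) n (w : C) :
  w ^+ (n`!)`_pi = 1 -> exists2 v, v ^+ n.+1 = w & v ^+ ((n.+1)`!)`_pi = 1.
Proof.
move=> wK; set E := ((n.+1)`_pi)%N; set u := E.-root w.
have uE : u ^+ E = w by rewrite rootCK ?part_gt0.
have uK : u ^+ ((n.+1)`!)`_pi = 1 by rewrite fact_partS exprM uE.
have coK : coprime (n.+1)`_pi^' ((n.+1)`!)`_pi.
  by rewrite coprime_sym coprime_partC.
have [v vu vK] := coprime_expr_root coK uK.
by exists v; rewrite // -(partnC pi (ltn0Sn n)) mulnC exprM vu.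
Qed.

Section PrimeTower.
Variables (C : numClosedFieldType) (q : nat).
Hypothesis q_prime : prime q.

(* Forcing a nontrivial root at level q makes the resulting character nontrivial. *)
Definition tower_step n (w v : C) : bool :=
  [&& v ^+ n.+1 == w, v ^+ ((n.+1)`!)`_q == 1 & (n.+1 == q) ==> (v != 1)].

Lemma tower_step_exists n w : w ^+ (n`!)`_q = 1 -> exists v, tower_step n w v.
Proof.
move=> wK; have [v vw vK] := unity_root_extend wK.
have [nq|nq] := eqVneq n.+1 q; last by exists v; rewrite /tower_step vw vK (negbTE nq) !eqxx.
have [v1|v_neq1] := eqVneq v 1; last by exists v; rewrite /tower_step vw vK v_neq1 !eqxx implybT.
have [z zq z_neq1] := nontrivial_unity_root C (prime_gt1 q_prime).
exists z; rewrite /tower_step z_neq1 implybT andbT fact_partS -vw v1 expr1n nq.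
by rewrite part_pnat_id ?pnat_id // exprM zq expr1n eqxx.
Qed.

Lemma tower_next_exists n (w : C) :
  exists v, (w ^+ (n`!)`_q == 1) ==> tower_step n w v.
Proof.
have [/eqP wK|] := boolP (w ^+ (n`!)`_q == 1); last by exists 0.
by have [v wv] := tower_step_exists wK; exists v.
Qed.

Fixpoint tower n : C :=
  if n is m.+1 then xchoose (tower_next_exists m (tower m)) else 1.

Lemma tower_stepP n : tower n ^+ (n`!)`_q = 1 -> tower_step n (tower n) (tower n.+1).
Proof. by move=> /eqP; apply/implyP: (xchooseP (tower_next_exists n (tower n))). Qed.

Lemma tower_unity n : tower n ^+ (n`!)`_q = 1.
Proof.
elim: n => [|n IHn]; first exact: expr1n.
by have /and3P[_ /eqP -> _] := tower_stepP IHn.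
Qed.

Lemma towerS n : tower n.+1 ^+ n.+1 = tower n.
Proof. by have /and3P[/eqP -> _ _] := tower_stepP (tower_unity n). Qed.

Lemma tower_q_neq1 : tower q != 1.
Proof.
have q_gt0 := prime_gt0 q_prime.
have /and3P[_ _] := tower_stepP (tower_unity q.-1).
by rewrite prednK // eqxx.
Qed.

Lemma norm_tower n : `|tower n| = 1.
Proof.
have /eqP := congr1 Num.norm (tower_unity n).
by rewrite normrX normr1 pexpr_eq1 ?part_gt0 // => /eqP.
Qed.

End PrimeTower.

Definition denqn (y : rat) : nat := `|denq y|%N.

Lemma denqn_gt0 y : (0 < denqn y)%N.
Proof. by rewrite absz_gt0 denq_neq0. Qed.

Lemma numq_div_denqn y : y = (numq y)%:~R / (denqn y)%:R.
Proof.
by rewrite -[LHS]divq_num_den; congr (_ / _); rewrite -{1}(gtz0_abs (denq_gt0 y)).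
Qed.

Lemma mulz_divn_eq (n a : int) (d b N : nat) : (d %| N)%N -> (b %| N)%N ->
  (0 < d)%N -> (0 < b)%N -> n%:~R / d%:R = a%:~R / b%:R :> rat ->
  n * (N %/ d)%N%:Z = a * (N %/ b)%N%:Z.
Proof.
move=> dN bN d_gt0 b_gt0 nab; apply: (@intr_inj rat).
rewrite !intrM -!pmulrn !natr_div ?unitfE ?pnatr_eq0 -?lt0n //.
by rewrite mulrCA nab mulrCA.
Qed.

Lemma fact_dvdn m n : (m <= n)%N -> (m`! %| n`!)%N.
Proof. by move=> mn; rewrite (fact_split mn) dvdn_mulr. Qed.

Section FactorialTower.
Variables (F : fieldType) (z : nat -> F).
Hypotheses (z_neq0 : forall n, z n != 0) (zS : forall n, z n.+1 ^+ n.+1 = z n).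

(* [z n] is the value at [1 / n!]. *)
Definition tower_char (y : rat) : F :=
  z (denqn y) ^ (numq y * ((denqn y)`! %/ denqn y)%N%:Z).

Lemma tower_shift m n : (m <= n)%N -> z n ^+ (n`! %/ m`!) = z m.
Proof.
elim: n => [|n IHn]; first by rewrite leqn0 => /eqP ->; rewrite divnn expr1.
rewrite leq_eqVlt => /orP[/eqP -> | ]; first by rewrite divnn fact_gt0 expr1.
rewrite ltnS => mn; by rewrite -(IHn mn) -(zS n) -exprM muln_divA ?fact_dvdn // -factS.
Qed.

Lemma tower_expz_shift (a : int) b m n : (0 < b)%N -> (b <= m <= n)%N ->
  z m ^ (a * (m`! %/ b)%N%:Z) = z n ^ (a * (n`! %/ b)%N%:Z).
Proof.
move=> b_gt0 /andP[bm mn]; rewrite -(tower_shift mn) exprnP exprz_exp.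
congr (_ ^ _); rewrite mulrCA -PoszM muln_divA ?dvdn_fact ?b_gt0 //.
by rewrite divnK // fact_dvdn.
Qed.

Lemma tower_char_frac (a : int) b m : (0 < b)%N -> (b <= m)%N ->
  tower_char (a%:~R / b%:R) = z m ^ (a * (m`! %/ b)%N%:Z).
Proof.
move=> b_gt0 bm; set y := a%:~R / b%:R; set M := maxn m (denqn y).
rewrite /tower_char (@tower_expz_shift _ _ _ M (denqn_gt0 y)) ?leqnn ?leq_maxr //.
rewrite (@tower_expz_shift _ _ _ M b_gt0) ?bm ?leq_maxl //; congr (_ ^ _).
apply: mulz_divn_eq; rewrite ?dvdn_fact ?denqn_gt0 ?b_gt0 ?leq_maxr //=.
  by rewrite (leq_trans bm) ?leq_maxl.
by rewrite -numq_div_denqn.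
Qed.

Lemma tower_charD (x y : rat) : tower_char (x + y) = tower_char x * tower_char y.
Proof.
have dx_gt0 := denqn_gt0 x; have dy_gt0 := denqn_gt0 y.
set dx := denqn x; set dy := denqn y; set M := (dx * dy)%N.
have M_gt0 : (0 < M)%N by rewrite muln_gt0 dx_gt0.
have dxM : (dx <= M)%N by rewrite leq_pmulr.
have dyM : (dy <= M)%N by rewrite leq_pmull.
have xyE : x + y = (numq x * dy%:Z + numq y * dx%:Z)%:~R / M%:R.
  rewrite {1}(numq_div_denqn x) {1}(numq_div_denqn y) addf_div ?pnatr_eq0 -?lt0n //.
  by rewrite intrD !intrM natrM.
rewrite xyE (tower_char_frac _ M_gt0 (leqnn M)).
rewrite [in tower_char x](numq_div_denqn x) (tower_char_frac _ dx_gt0 dxM).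
rewrite [in tower_char y](numq_div_denqn y) (tower_char_frac _ dy_gt0 dyM).
rewrite -exprzDr ?unitfE ?z_neq0 // -/dx -/dy; congr (_ ^ _).
have MK : (M`! %/ M * M)%N = M`! by rewrite divnK // dvdn_fact // M_gt0 leqnn.
have -> : (M`! %/ dx = M`! %/ M * dy)%N by rewrite -{1}MK /M mulnCA mulKn.
have -> : (M`! %/ dy = M`! %/ M * dx)%N by rewrite -{1}MK /M mulnA mulnK.
rewrite !PoszM; ring.
Qed.

End FactorialTower.

Lemma norm_exprz (F : numFieldType) (x : F) (k : int) : `|x| = 1 -> `|x ^ k| = 1.
Proof.
move=> x1; case: k => k; first by rewrite -exprnP normrX x1 expr1n.
by rewrite NegzE -invr_expz normfV -exprnP normrX x1 expr1n invr1.
Qed.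

Section PrimeCharacter.
Variables (C : numClosedFieldType) (q : nat).
Hypothesis q_prime : prime q.

Definition prime_char : rat -> C := tower_char (tower C q_prime).

Lemma tower_neq0 n : tower C q_prime n != 0.
Proof. by rewrite -normr_eq0 norm_tower ?oner_eq0. Qed.

Lemma norm_prime_char y : `|prime_char y| = 1.
Proof. exact/norm_exprz/norm_tower. Qed.

Lemma prime_charD x y : prime_char (x + y) = prime_char x * prime_char y.
Proof. exact: (tower_charD tower_neq0 (towerS C q_prime)). Qed.

Lemma prime_char_frac_coprime (c : int) e : ~~ (q %| e)%N -> prime_char (c%:~R / e%:R) = 1.
Proof.
move=> q_ndvd_e; have e_gt0 : (0 < e)%N by rewrite lt0n; apply: contraNneq q_ndvd_e => ->.
rewrite /prime_char (tower_char_frac (towerS C q_prime) _ e_gt0 (leqnn e)).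
have [k ->] : exists k, (e`! %/ e = k * (e`!)`_q)%N.
  apply/dvdnP; rewrite -(prednK e_gt0) fact_partS factS mulKn //.
  by rewrite part_p'nat ?mul1n ?dvdn_part // p'natE // prednK.
by rewrite mulrC -exprz_exp -exprnP mulnC exprM tower_unity expr1n exp1rz.
Qed.

Lemma prime_char_nontrivial : prime_char (1 / (q`!)%:R) != 1.
Proof.
rewrite /prime_char (tower_char_frac (towerS C q_prime) 1 (fact_gt0 q) (leqnn _)).
by rewrite mul1r -exprnP (tower_shift (towerS C q_prime)) ?fact_geq ?tower_q_neq1.
Qed.

End PrimeCharacter.

Lemma gen_subgroup_sub (P : rat -> Prop) (gens : seq rat) :
  P 1 -> (forall x y, P x -> P y -> P (x * y)) -> (forall x, P x -> P x^-1) ->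
  (forall x, x \in gens -> P x) -> forall gamma, gen_subgroup gens gamma -> P gamma.
Proof.
move=> P1 PM PV Pgens gamma [ks [_ ->]].
have PX x n : P x -> P (x ^+ n).
  by move=> Px; elim: n => [|n IHn]; [rewrite expr0 | rewrite exprS; apply: PM].
apply: (big_ind P) => // i _; have Pi := Pgens _ (mem_nth 0 (ltn_ord i)).
by case: (ks`_i) => n; rewrite ?NegzE -?invr_expz -exprnP; [apply: PX | apply/PV/PX].
Qed.

(* The positive units of the localisation Z_(q). *)
Definition coprime_ratio (q : nat) (y : rat) : Prop :=
  exists a b : nat, [/\ ~~ (q %| a)%N, ~~ (q %| b)%N & y = a%:R / b%:R].

Section CoprimeRatio.
Variables (q : nat).
Hypothesis q_prime : prime q.

Lemma coprime_ratio1 : coprime_ratio q 1.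
Proof. by exists 1%N, 1%N; rewrite divr1 dvdn1 neq_ltn prime_gt1 ?orbT. Qed.

Lemma coprime_ratioM x y : coprime_ratio q x -> coprime_ratio q y -> coprime_ratio q (x * y).
Proof.
move=> [a [b [qa qb ->]]] [c [d [qc qd ->]]]; exists (a * c)%N, (b * d)%N.
by rewrite mulf_div -!natrM !Euclid_dvdM // !negb_or qa qb qc qd.
Qed.

Lemma coprime_ratioV x : coprime_ratio q x -> coprime_ratio q x^-1.
Proof. by move=> [a [b [qa qb ->]]]; exists b, a; rewrite invf_div. Qed.

Lemma coprime_ratio_gen_subgroup gens gamma : {in gens, forall y, coprime_ratio q y} ->
  gen_subgroup gens gamma -> coprime_ratio q gamma.
Proof.
move=> gens_q; apply: gen_subgroup_sub gens_q gamma.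
- exact: coprime_ratio1.
- exact: coprime_ratioM.
- exact: coprime_ratioV.
Qed.

Lemma coprime_ratio_mul_prime_char (C : numClosedFieldType) gamma x :
  coprime_ratio q gamma -> ~~ (q %| denqn x)%N -> prime_char C q_prime (gamma * x) = 1.
Proof.
move=> [a [b [_ qb ->]]] qx; rewrite [x]numq_div_denqn mulf_div -natrM.
have -> : a%:R * (numq x)%:~R = (a%:Z * numq x)%:~R :> rat by rewrite intrM.
by rewrite prime_char_frac_coprime // Euclid_dvdM // negb_or qb.
Qed.

End CoprimeRatio.


Lemma exists_prime_coprime_ratio (xs gens : seq rat) : {in gens, forall y, 0 < y} ->
  exists2 q, prime q &
    {in gens, forall y, coprime_ratio q y} /\ {in xs, forall x, ~~ (q %| denqn x)%N}.
Proof.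
move=> gens_pos.
pose B := maxn (\max_(x <- xs) denqn x) (\max_(y <- gens) maxn `|numq y| (denqn y)).
have [q B_lt_q q_prime] := prime_above B.
have q_ndvd n : (0 < n)%N -> (n <= B)%N -> ~~ (q %| n)%N.
  by move=> n_gt0 nB; rewrite gtnNdvd // (leq_ltn_trans nB).
exists q => //; split=> [y y_gens | x x_xs]; last first.
  by rewrite q_ndvd ?denqn_gt0 // leq_max; apply/orP; left; apply: leq_bigmax_seq.
have yB : (maxn `|numq y| (denqn y) <= B)%N.
  by rewrite leq_max; apply/orP; right; apply: leq_bigmax_seq.
have y_gt0 := gens_pos y y_gens.
exists `|numq y|%N, (denqn y); rewrite !q_ndvd ?absz_gt0 ?numq_eq0 ?gt_eqF ?denqn_gt0 //.
- by rewrite [LHS]numq_div_denqn -[numq y in LHS]gtz0_abs ?numq_gt0.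
- by apply: leq_trans yB; rewrite leq_maxr.
- by apply: leq_trans yB; rewrite leq_maxl.
Qed.

Theorem not_expansive_gen_subgroup (R : realType) (gens : seq rat) :
  all (fun q => 0 < q) gens -> ~ expansive_on R (gen_subgroup gens).
Proof.
move=> /allP gens_pos [U [[xs [eps [eps_gt0 xsU]]] U_expansive]].
have [q q_prime [gens_q xs_q]] := exists_prime_coprime_ratio xs gens_pos.
pose chi := prime_char R[i] q_prime.
have chi_char : is_char chi by split; [exact: norm_prime_char | exact: prime_charD].
have chi_U gamma : gen_subgroup gens gamma -> U (rho gamma chi).
  move=> gamma_gen; apply: xsU => [|x x_xs]; first exact: is_char_rho.
  rewrite /rho /chi coprime_ratio_mul_prime_char ?xs_q ?subrr ?normr0 ?(ltcR 0) //.
  exact: coprime_ratio_gen_subgroup gamma_gen.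
have chi1 := (U_expansive chi chi_char).1 chi_U.
by have := prime_char_nontrivial R[i] q_prime; rewrite -/chi chi1 eqxx.
Qed.

Theorem mainTheorem18 (R : realType) :
  expansive_on R posQ /\
  (forall gens : seq rat, all (fun q => 0 < q) gens ->
     ~ expansive_on R (gen_subgroup gens)).
Proof. by split; [exact: expansive_posQ | exact: not_expansive_gen_subgroup]. Qed.
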